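(* Let $\delta\in(0,1)$, $c>2\sqrt{rd}$ and $h>0$, and define $\pi_{\delta,c,h}(\xi)=\pi_{\delta,c}(\xi)+h\xi$. Then $$-d\,\pi_{\delta,c,h}''-c\,\pi_{\delta,c,h}'\le r\,\pi_{\delta,c,h}\big(1-\delta-\pi_{\delta,c,h}\big)\quad\text{on }\Big[-\sqrt{\tfrac{c}{rh}},\sqrt{\tfrac{c}{rh}}\Big].$$ Furthermore, there exists $h^\star>0$ such that for all $h\in(0,h^\star]$, $$\max_{[-\sqrt{c/(rh)},0]}\pi_{\delta,c,h}\ge1-2\delta\quad\text{and}\quad\max_{[-\sqrt{c/(rh)},0]}\pi_{\delta,c,h}>\max\Big(\pi_{\delta,c,h}(0),\ \pi_{\delta,c,h}\big(-\sqrt{\tfrac{c}{rh}}\big)\Big).$$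
   Context: Fixed parameters $d>0$, $r>0$. For $\delta\in[0,1)$ and $c\ge2\sqrt{rd}$, $\pi_{\delta,c}$ denotes the unique decreasing traveling wave profile with speed $c$ of the scalar equation $\partial_tv-d\partial_{xx}v=rv(1-\delta-v)$, i.e. the solution of $-d\pi''-c\pi'=r\pi(1-\delta-\pi)$ on $\mathbb{R}$ with $\pi(-\infty)=1-\delta$, $\pi(+\infty)=0$, normalized by $\pi_{\delta,c}(0)=\frac{1-\delta}{2}$. *)

From Stdlib Require Import Reals Lra.
Open Scope R_scope.

(* [pi] is a decreasing traveling-wave profile with speed [c] of
   d_t v - d v_xx = r v (1 - delta - v), normalized by pi(0) = (1-delta)/2:
   pi is twice differentiable (first derivative pi1, second pi2) and
   -d pi'' - c pi' = r pi (1 - delta - pi) on R,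
   pi(-oo) = 1 - delta, pi(+oo) = 0. *)
Definition is_tw (d r delta c : R) (pi : R -> R) : Prop :=
  exists pi1 pi2 : R -> R,
    (forall x, derivable_pt_lim pi x (pi1 x)) /\
    (forall x, derivable_pt_lim pi1 x (pi2 x)) /\
    (forall x, - d * pi2 x - c * pi1 x = r * pi x * (1 - delta - pi x)) /\
    (forall x y, x < y -> pi y <= pi x) /\
    (forall eps, 0 < eps -> exists M, forall x, x <= - M ->
        Rabs (pi x - (1 - delta)) < eps) /\
    (forall eps, 0 < eps -> exists M, forall x, M <= x -> Rabs (pi x) < eps) /\
    pi 0 = (1 - delta) / 2.

Definition pi_h (pi : R -> R) (h : R) (x : R) : R := pi x + h * x.

Definition Lh (r c h : R) : R := sqrt (c / (r * h)).

(** Setting [L = sqrt (c / (r h))], so that [h L = c / (r L)], the residual of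
    [pi_h] in the traveling-wave inequality is
    [r h x (1 - delta - 2 pi x) + h (c - r h x^2)]; both terms are nonnegative on
    [[-L, L]] because [pi] crosses [(1 - delta) / 2] at [0].

    For the maximum, [F = - d pi' - c pi] satisfies [F' = r pi (1 - delta - pi)],
    so [F] is nondecreasing and bounded below on [(-oo, 0]], hence Cauchy at
    [-oo].  Since [pi >= (1 - delta) / 2] there, [F x - F (2 x)] dominates a
    multiple of [|x| (1 - delta - pi (2 x))], which forces [L (1 - delta - pi (-L/2)) -> 0].
    For small [h] the value [pi_h (-L/2) = 1 - delta - o(1/L) - c / (2 r L)]
    then beats [pi_h 0 = (1 - delta) / 2], [pi_h (-L) <= 1 - delta - c / (r L)]
    and [1 - 2 delta]. *)

From Stdlib Require Import Reals Lra Psatz FunctionalExtensionality Classical.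
Open Scope R_scope.

Lemma nonincreasing_le (f : R -> R) :
  (forall x y, x < y -> f y <= f x) -> forall x y, x <= y -> f y <= f x.
Proof.
  intros Hf x y Hxy.
  destruct (Rle_lt_or_eq_dec _ _ Hxy) as [Hlt | ->]; [now apply Hf | lra].
Qed.

Lemma derivable_pt_lim_nonincreasing_le0 (f : R -> R) (x l : R) :
  (forall a b, a < b -> f b <= f a) -> derivable_pt_lim f x l -> l <= 0.
Proof.
  intros Hf Hd. destruct (Rle_or_lt l 0) as [| Hl]; [assumption | exfalso].
  destruct (Hd (l / 2) ltac:(lra)) as [del Hdel].
  pose proof (cond_pos del) as Hdel_pos.
  specialize (Hdel (del / 2) ltac:(lra) ltac:(rewrite Rabs_right; lra)).
  apply Rabs_def2 in Hdel as [_ Hq].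
  pose proof (Hf x (x + del / 2) ltac:(lra)).
  set (q := (f (x + del / 2) - f x) / (del / 2)) in *.
  assert (q * (del / 2) = f (x + del / 2) - f x) by (unfold q; field; lra).
  nra.
Qed.

Lemma nonincreasing_le_limit_minfty (f : R -> R) (l : R) :
  (forall x y, x < y -> f y <= f x) ->
  (forall eps, 0 < eps -> exists M, forall x, x <= - M -> Rabs (f x - l) < eps) ->
  forall x, f x <= l.
Proof.
  intros Hf Hlim x. destruct (Rle_or_lt (f x) l) as [| Hx]; [assumption | exfalso].
  destruct (Hlim (f x - l) ltac:(lra)) as [M HM].
  pose proof (Rmin_l (x - 1) (- M)). pose proof (Rmin_r (x - 1) (- M)).
  specialize (HM (Rmin (x - 1) (- M)) ltac:(lra)). apply Rabs_def2 in HM.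
  pose proof (Hf (Rmin (x - 1) (- M)) x ltac:(lra)). lra.
Qed.

Lemma nondecreasing_bounded_below_cauchy_minfty (F : R -> R) (m : R) :
  (forall a b, a <= b <= 0 -> F a <= F b) -> (forall x, m <= F x) ->
  forall eps, 0 < eps ->
  exists x0, x0 <= 0 /\ forall x y, y <= x <= x0 -> F x - F y < eps.
Proof.
  intros Hmono Hlow eps Heps.
  set (E := fun v => exists x, x <= 0 /\ v = - F x).
  assert (Hbound : bound E).
  { exists (- m). intros v [x [_ ->]]. specialize (Hlow x). lra. }
  destruct (completeness E Hbound (ex_intro _ (- F 0) (ex_intro _ 0 (conj (Rle_refl 0) eq_refl))))
    as [s [Hub Hleast]].
  assert (Happrox : exists x0, x0 <= 0 /\ s - eps < - F x0).
  { apply NNPP. intros Hno.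
    assert (is_upper_bound E (s - eps)).
    { intros v [x [Hx ->]]. apply Rnot_lt_le. intros Hlt. apply Hno. now exists x. }
    specialize (Hleast _ H). lra. }
  destruct Happrox as [x0 [Hx0 Hs]]. exists x0. split; [assumption |].
  intros x y Hyx.
  assert (Hy : E (- F y)) by (exists y; split; [lra | reflexivity]).
  specialize (Hub _ Hy). pose proof (Hmono x x0 ltac:(lra)). lra.
Qed.

Lemma Rle_div_mult (a b x : R) : 0 < b -> a / b <= x -> a <= x * b.
Proof.
  intros Hb Hx. apply (Rmult_le_compat_r b) in Hx; [| lra].
  now replace (a / b * b) with a in Hx by (field; lra).
Qed.

Lemma Rlt_div_mult (a b x : R) : 0 < b -> x < a / b -> x * b < a.
Proof.
  intros Hb Hx. apply (Rmult_lt_compat_r b) in Hx; [| lra].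
  now replace (a / b * b) with a in Hx by (field; lra).
Qed.

Lemma Lh_sqr (r c h : R) : 0 < r -> 0 < c -> 0 < h ->
  0 < Lh r c h /\ r * h * (Lh r c h * Lh r c h) = c.
Proof.
  intros Hr Hc Hh. assert (0 < c / (r * h)) by (apply Rdiv_lt_0_compat; nra).
  unfold Lh. split; [now apply sqrt_lt_R0 |].
  rewrite sqrt_sqrt by lra. field. lra.
Qed.

Lemma sqr_le_Lh (r c h x : R) : 0 < r -> 0 < c -> 0 < h ->
  - Lh r c h <= x <= Lh r c h -> r * h * (x * x) <= c.
Proof.
  intros Hr Hc Hh Hx. destruct (Lh_sqr r c h Hr Hc Hh) as [HL HLL].
  rewrite <- HLL. apply Rmult_le_compat_l; nra.
Qed.

Lemma Lh_ge (r c h L : R) : 0 < r -> 0 < c -> 0 < L ->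
  0 < h <= c / (r * (L * L)) -> L <= Lh r c h.
Proof.
  intros Hr Hc HL [Hh HhL]. unfold Lh.
  rewrite <- (sqrt_square L) at 1 by lra. apply sqrt_le_1_alt.
  apply (Rmult_le_reg_l (r * h)); [nra |].
  replace (r * h * (c / (r * h))) with c by (field; lra).
  apply (Rmult_le_compat_r (r * (L * L))) in HhL; [| nra].
  replace (c / (r * (L * L)) * (r * (L * L))) with c in HhL by (field; nra).
  nra.
Qed.

Section TravelingWave.

Variables (d r delta c : R) (pi pi1 pi2 : R -> R).
Hypotheses (d_pos : 0 < d) (r_pos : 0 < r) (delta_bounds : 0 < delta < 1) (c_pos : 0 < c).
Hypothesis pi_deriv : forall x, derivable_pt_lim pi x (pi1 x).
Hypothesis pi1_deriv : forall x, derivable_pt_lim pi1 x (pi2 x).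
Hypothesis tw_ode : forall x, - d * pi2 x - c * pi1 x = r * pi x * (1 - delta - pi x).
Hypothesis pi_nonincreasing : forall x y, x < y -> pi y <= pi x.
Hypothesis pi_minfty : forall eps, 0 < eps ->
  exists M, forall x, x <= - M -> Rabs (pi x - (1 - delta)) < eps.
Hypothesis pi_0 : pi 0 = (1 - delta) / 2.

Let pi_le x y : x <= y -> pi y <= pi x.
Proof. now apply nonincreasing_le. Qed.

Let pi_le_top x : pi x <= 1 - delta.
Proof. now apply nonincreasing_le_limit_minfty. Qed.

Lemma pi_h_derivable h y : derivable_pt_lim (pi_h pi h) y (pi1 y + h * 1).
Proof.
  apply (derivable_pt_lim_plus pi (fun x => h * x)); [apply pi_deriv |].
  apply (derivable_pt_lim_scal id). apply derivable_pt_lim_id.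
Qed.

Lemma pi_h_derivatives h p1 p2 :
  (forall y, derivable_pt_lim (pi_h pi h) y (p1 y)) ->
  (forall y, derivable_pt_lim p1 y (p2 y)) ->
  forall x, p1 x = pi1 x + h /\ p2 x = pi2 x.
Proof.
  intros Hp1 Hp2 x.
  assert (Ep1 : p1 = fun y => pi1 y + h * 1).
  { apply functional_extensionality. intros y.
    exact (uniqueness_limite _ y _ _ (Hp1 y) (pi_h_derivable h y)). }
  split; [rewrite Ep1; ring |].
  rewrite <- (Rplus_0_r (pi2 x)). apply (uniqueness_limite p1 x); [apply Hp2 |].
  rewrite Ep1. apply (derivable_pt_lim_plus pi1 (fun _ => h * 1)).
  - apply pi1_deriv.
  - apply derivable_pt_lim_const.
Qed.

Lemma mul_midgap_nonneg x : 0 <= x * (1 - delta - 2 * pi x).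
Proof.
  destruct (Rle_or_lt x 0) as [Hx | Hx].
  - pose proof (pi_le x 0 Hx). nra.
  - pose proof (pi_le 0 x ltac:(lra)). nra.
Qed.

Lemma pi_h_subsolution h x : 0 < h -> r * h * (x * x) <= c ->
  - d * pi2 x - c * (pi1 x + h) <= r * pi_h pi h x * (1 - delta - pi_h pi h x).
Proof.
  intros Hh Hx. unfold pi_h.
  pose proof (mul_midgap_nonneg x). pose proof (tw_ode x).
  assert (0 <= r * h * (x * (1 - delta - 2 * pi x))) by (apply Rmult_le_pos; nra).
  assert (0 <= h * (c - r * h * (x * x))) by (apply Rmult_le_pos; lra).
  nra.
Qed.

Definition flux x := - d * pi1 x - c * pi x.

Lemma flux_mvt a b : a < b -> exists xi, a < xi < b /\
  flux b - flux a = r * pi xi * (1 - delta - pi xi) * (b - a).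
Proof.
  intros Hab.
  destruct (MVT_cor2 flux (fun y => - d * pi2 y - c * pi1 y) a b Hab) as [xi [E Hxi]].
  - intros y _. apply (derivable_pt_lim_minus (fun y => - d * pi1 y) (fun y => c * pi y)).
    + apply (derivable_pt_lim_scal pi1). apply pi1_deriv.
    + apply (derivable_pt_lim_scal pi). apply pi_deriv.
  - exists xi. split; [assumption |]. now rewrite E, tw_ode.
Qed.

Lemma flux_nondecreasing a b : a <= b <= 0 -> flux a <= flux b.
Proof.
  intros [Hab Hb]. destruct (Rle_lt_or_eq_dec _ _ Hab) as [Hlt | ->]; [| lra].
  destruct (flux_mvt a b Hlt) as [xi [Hxi E]].
  pose proof (pi_le xi 0 ltac:(lra)). pose proof (pi_le_top xi).
  assert (0 <= r * pi xi * (1 - delta - pi xi)) by (apply Rmult_le_pos; nra).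
  assert (0 <= r * pi xi * (1 - delta - pi xi) * (b - a)) by (apply Rmult_le_pos; lra).
  lra.
Qed.

Lemma flux_lower_bound x : - c * (1 - delta) <= flux x.
Proof.
  unfold flux. pose proof (pi_le_top x).
  pose proof (derivable_pt_lim_nonincreasing_le0 pi x (pi1 x) pi_nonincreasing (pi_deriv x)).
  nra.
Qed.

Lemma flux_increment_lower x : x < 0 ->
  r * ((1 - delta) / 2) * (1 - delta - pi (2 * x)) * (- x) <= flux x - flux (2 * x).
Proof.
  intros Hx. destruct (flux_mvt (2 * x) x ltac:(lra)) as [xi [Hxi ->]].
  pose proof (pi_le xi 0 ltac:(lra)). pose proof (pi_le_top xi).
  pose proof (pi_le (2 * x) xi ltac:(lra)). pose proof (pi_le_top (2 * x)).
  replace (x - 2 * x) with (- x) by ring.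
  apply Rmult_le_compat_r; [lra |]. rewrite !Rmult_assoc.
  apply Rmult_le_compat_l; [lra |]. apply Rmult_le_compat; lra.
Qed.

Lemma gap_at_half_vanishes eps : 0 < eps ->
  exists M, forall L, M <= L -> L * (1 - delta - pi (- L / 2)) < eps.
Proof.
  intros Heps. set (kap := r * ((1 - delta) / 2)).
  assert (Hkap : 0 < kap) by (unfold kap; nra).
  destruct (nondecreasing_bounded_below_cauchy_minfty flux (- c * (1 - delta))
              flux_nondecreasing flux_lower_bound (kap * eps / 4))
    as [x0 [Hx0 Hcauchy]]; [nra |].
  exists (Rmax 1 (- 4 * x0)). intros L HL.
  pose proof (Rmax_l 1 (- 4 * x0)). pose proof (Rmax_r 1 (- 4 * x0)).
  specialize (Hcauchy (- L / 4) (2 * (- L / 4)) ltac:(lra)).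
  pose proof (flux_increment_lower (- L / 4) ltac:(lra)) as Hinc.
  replace (2 * (- L / 4)) with (- L / 2) in * by field. fold kap in Hinc.
  apply (Rmult_lt_reg_l (kap / 4)); [lra |]. nra.
Qed.

Lemma pi_h_interior_max h L :
  0 < h -> 0 < L -> 2 * (1 - delta - pi (- L / 2)) < h * L ->
  h * L <= delta -> h * L <= (1 - delta) / 2 ->
  exists xm, - L <= xm <= 0 /\
    (forall y, - L <= y <= 0 -> pi_h pi h y <= pi_h pi h xm) /\
    1 - 2 * delta <= pi_h pi h xm /\
    Rmax (pi_h pi h 0) (pi_h pi h (- L)) < pi_h pi h xm.
Proof.
  intros Hh HL Hgap HhLd HhLh.
  pose proof (pi_le_top (- L)).
  assert (Hval : pi_h pi h (- L / 2) = 1 - delta - (1 - delta - pi (- L / 2)) - h * L / 2)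
    by (unfold pi_h; field).
  destruct (continuity_ab_maj (pi_h pi h) (- L) 0 ltac:(lra)) as [xm [Hmax Hxm]].
  { intros y _. apply derivable_continuous_pt. exists (pi1 y + h * 1). apply pi_h_derivable. }
  pose proof (Hmax (- L / 2) ltac:(lra)).
  exists xm. split; [assumption |]. split; [assumption |]. split; [lra |].
  apply Rmax_lub_lt; unfold pi_h at 1; [rewrite pi_0 |]; nra.
Qed.

Lemma pi_h_interior_max_small_h : exists hstar, 0 < hstar /\
  forall h, 0 < h <= hstar ->
  exists xm, - Lh r c h <= xm <= 0 /\
    (forall y, - Lh r c h <= y <= 0 -> pi_h pi h y <= pi_h pi h xm) /\
    1 - 2 * delta <= pi_h pi h xm /\
    Rmax (pi_h pi h 0) (pi_h pi h (- Lh r c h)) < pi_h pi h xm.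
Proof.
  destruct (gap_at_half_vanishes (c / (2 * r))) as [M HM]; [apply Rdiv_lt_0_compat; lra |].
  set (L0 := Rmax (Rmax 1 M) (Rmax (c / (r * delta)) (c / (r * ((1 - delta) / 2))))).
  assert (1 <= L0 /\ M <= L0 /\ c / (r * delta) <= L0 /\
                c / (r * ((1 - delta) / 2)) <= L0) as (HL0one & HL0M & HL0d & HL0half).
  { unfold L0.
    pose proof (Rmax_l 1 M). pose proof (Rmax_r 1 M).
    pose proof (Rmax_l (c / (r * delta)) (c / (r * ((1 - delta) / 2)))).
    pose proof (Rmax_r (c / (r * delta)) (c / (r * ((1 - delta) / 2)))).
    pose proof (Rmax_l (Rmax 1 M) (Rmax (c / (r * delta)) (c / (r * ((1 - delta) / 2))))).
    pose proof (Rmax_r (Rmax 1 M) (Rmax (c / (r * delta)) (c / (r * ((1 - delta) / 2))))).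
    lra. }
  assert (HL0sq : 0 < r * (L0 * L0)) by (apply Rmult_lt_0_compat; nra).
  exists (c / (r * (L0 * L0))). split; [now apply Rdiv_lt_0_compat |].
  intros h Hh. pose proof (Lh_ge r c h L0 r_pos c_pos ltac:(lra) Hh) as HL0h.
  destruct (Lh_sqr r c h r_pos c_pos ltac:(lra)) as [HL HLL].
  set (L := Lh r c h) in *.
  assert (HrL : 0 < r * L) by nra.
  apply pi_h_interior_max; [lra | assumption | | |].
  - apply (Rmult_lt_reg_l (r * L)); [assumption |].
    specialize (HM L ltac:(lra)). apply Rlt_div_mult in HM; nra.
  - apply (Rmult_le_reg_l (r * L)); [assumption |].
    apply (Rle_div_mult c (r * delta)) in HL0d; nra.
  - apply (Rmult_le_reg_l (r * L)); [assumption |].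
    apply (Rle_div_mult c (r * ((1 - delta) / 2))) in HL0half; nra.
Qed.

End TravelingWave.

Theorem lemma4p9 (d r delta c : R) (pi : R -> R) :
  0 < d -> 0 < r -> 0 < delta < 1 -> 2 * sqrt (r * d) < c ->
  is_tw d r delta c pi ->
  (forall h : R, 0 < h ->
     forall p1 p2 : R -> R,
       (forall y, derivable_pt_lim (pi_h pi h) y (p1 y)) ->
       (forall y, derivable_pt_lim p1 y (p2 y)) ->
       forall x, - Lh r c h <= x <= Lh r c h ->
         - d * p2 x - c * p1 x <= r * pi_h pi h x * (1 - delta - pi_h pi h x))
  /\
  (exists hstar : R, 0 < hstar /\
     forall h : R, 0 < h <= hstar ->
       exists xm : R, - Lh r c h <= xm <= 0 /\
         (forall y, - Lh r c h <= y <= 0 -> pi_h pi h y <= pi_h pi h xm) /\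
         1 - 2 * delta <= pi_h pi h xm /\
         Rmax (pi_h pi h 0) (pi_h pi h (- Lh r c h)) < pi_h pi h xm).
Proof.
  intros Hd Hr Hdelta Hc [pi1 [pi2 [Hpi1 [Hpi2 [Hode [Hmono [Hminfty [_ Hpi0]]]]]]]].
  assert (Hc_pos : 0 < c) by (pose proof (sqrt_pos (r * d)); lra).
  split.
  - intros h Hh p1 p2 Hp1 Hp2 x Hx.
    destruct (pi_h_derivatives pi pi1 pi2 Hpi1 Hpi2 h p1 p2 Hp1 Hp2 x) as [-> ->].
    apply (pi_h_subsolution d r delta c pi pi1 pi2); try assumption.
    now apply sqr_le_Lh.
  - exact (pi_h_interior_max_small_h d r delta c pi pi1 pi2 Hd Hr Hdelta Hc_pos
             Hpi1 Hpi2 Hode Hmono Hminfty Hpi0).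
Qed.
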